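(* Let $(Y,f)$ be an expansive dynamical system with expansiveness constant $\varepsilon_Y$, equipped with an adapted metric. Suppose $y_1\sim_{\mathrm{lcs}}y_2$ with stable local conjugacy $\gamma$. Given $0<\varepsilon\le\varepsilon_Y$, there exist $\delta>0$ and $N\in\mathbb{N}$ such that for every $n\ge N$ the stable local conjugacy \[ f^n\circ\gamma\circ f^{-n}:Y^u(f^n(y_1),\delta)\to Y^u(f^n(y_2),\varepsilon) \] from $f^n(y_1)$ to $f^n(y_2)$ is well defined (i.e. its image is contained in $Y^u(f^n(y_2),\varepsilon)$) and is given by $z\mapsto[z,f^n(y_2)]$ for $z\in Y^u(f^n(y_1),\delta)$.
   Context: $(Y,f)$: compact metric space with homeomorphism $f$; expansive with constant $\varepsilon_Y$: $d(f^ny,f^ny')\le\varepsilon_Y$ for all $n\in\mathbb{Z}$ implies $y=y'$. Local sets $Y^s(y,\varepsilon)=\{z:d(f^ny,f^nz)<\varepsilon\ \forall n\ge0\}$, $Y^u(y,\varepsilon)=\{z:d(f^{-n}y,f^{-n}z)<\varepsilon\ \forall n\ge0\}$; $Y^u(y)$ = unstable class ($d(f^{-n}y,f^{-n}z)\to0$). Bracket: $[a,b]$ is the unique point of $Y^s(a,\varepsilon)\cap Y^u(b,\varepsilon)$ when this is nonempty. Adapted metric: a compatible metric with $\eta>0$, $0<\lambda<1$ such that $f$ contracts by $\lambda$ on $Y^s(y,\eta)$ and $f^{-1}$ contracts by $\lambda$ on $Y^u(y,\eta)$. Stable local conjugacy from $y_1$ to $y_2$: a homeomorphism $\gamma:U\to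 V$ between open neighbourhoods $U\ni y_1$ in $Y^u(y_1)$ and $V\ni y_2$ in $Y^u(y_2)$ with $\gamma(y_1)=y_2$ and $\sup_{z\in U}d(f^kz,f^k\gamma(z))\to0$ as $k\to\infty$; $y_1\sim_{\mathrm{lcs}}y_2$ if one exists. *)

From Stdlib Require Import Reals Lra Lia.
Open Scope R_scope.

Section Defs.
Context {Y : Type}.

Definition is_metric (d : Y -> Y -> R) : Prop :=
  (forall x y, 0 <= d x y) /\ (forall x y, d x y = 0 <-> x = y) /\
  (forall x y, d x y = d y x) /\ (forall x y z, d x z <= d x y + d y z).

Definition is_compact_metric (d : Y -> Y -> R) : Prop :=
  forall u : nat -> Y, exists (phi : nat -> nat) (l : Y),
    (forall k, (phi k < phi (S k))%nat) /\
    (forall e, 0 < e -> exists N, forall k, (N <= k)%nat -> d (u (phi k)) l < e).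

Definition mcontinuous (d : Y -> Y -> R) (g : Y -> Y) : Prop :=
  forall x e, 0 < e -> exists del, 0 < del /\ forall y, d x y < del -> d (g x) (g y) < e.

Definition is_homeo (d : Y -> Y -> R) (f finv : Y -> Y) : Prop :=
  (forall x, finv (f x) = x) /\ (forall x, f (finv x) = x) /\
  mcontinuous d f /\ mcontinuous d finv.

Definition fpow (f finv : Y -> Y) (n : Z) : Y -> Y :=
  match n with
  | Z0 => fun x => x
  | Zpos p => Nat.iter (Pos.to_nat p) f
  | Zneg p => Nat.iter (Pos.to_nat p) finv
  end.

Definition expansive (d : Y -> Y -> R) (f finv : Y -> Y) (eY : R) : Prop :=
  0 < eY /\
  forall y y', (forall n : Z, d (fpow f finv n y) (fpow f finv n y') <= eY) -> y = y'.

Definition Ys (d : Y -> Y -> R) (f : Y -> Y) (y : Y) (e : R) (z : Y) : Prop :=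
  forall n : nat, d (Nat.iter n f y) (Nat.iter n f z) < e.
Definition Yu (d : Y -> Y -> R) (finv : Y -> Y) (y : Y) (e : R) (z : Y) : Prop :=
  forall n : nat, d (Nat.iter n finv y) (Nat.iter n finv z) < e.

Definition Yu_class (d : Y -> Y -> R) (finv : Y -> Y) (y z : Y) : Prop :=
  forall e, 0 < e -> exists N, forall n, (N <= n)%nat ->
    d (Nat.iter n finv y) (Nat.iter n finv z) < e.

Definition adapted (d : Y -> Y -> R) (f finv : Y -> Y) : Prop :=
  exists eta lam, 0 < eta /\ 0 < lam < 1 /\
    (forall y z w, Ys d f y eta z -> Ys d f y eta w -> d (f z) (f w) <= lam * d z w) /\
    (forall y z w, Yu d finv y eta z -> Yu d finv y eta w ->
                   d (finv z) (finv w) <= lam * d z w).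

(* open subsets of Y^u(y), for the topology on Y^u(y) generated by the
   local unstable sets Y^u(z,e) *)
Definition uopen (d : Y -> Y -> R) (finv : Y -> Y) (y : Y) (A : Y -> Prop) : Prop :=
  (forall z, A z -> Yu_class d finv y z) /\
  (forall z, A z -> exists e, 0 < e /\ forall w, Yu d finv z e w -> A w).

Definition ucont (d : Y -> Y -> R) (finv : Y -> Y) (x x' : Y) (U : Y -> Prop)
  (h : Y -> Y) : Prop :=
  forall B, uopen d finv x' B -> uopen d finv x (fun z => U z /\ B (h z)).

Definition slc (d : Y -> Y -> R) (f finv : Y -> Y) (y1 y2 : Y)
  (U V : Y -> Prop) (gamma : Y -> Y) : Prop :=
  uopen d finv y1 U /\ U y1 /\ uopen d finv y2 V /\ V y2 /\
  gamma y1 = y2 /\ (forall z, U z -> V (gamma z)) /\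
  (exists g : Y -> Y,
     (forall z, V z -> U (g z)) /\
     (forall z, U z -> g (gamma z) = z) /\
     (forall z, V z -> gamma (g z) = z) /\
     ucont d finv y1 y2 U gamma /\ ucont d finv y2 y1 V g) /\
  (forall e, 0 < e -> exists K, forall k, (K <= k)%nat ->
     forall z, U z -> d (Nat.iter k f z) (Nat.iter k f (gamma z)) <= e).

(* w = [a,b] at scale e: the unique point of Y^s(a,e) ∩ Y^u(b,e) *)
Definition is_bracket (d : Y -> Y -> R) (f finv : Y -> Y) (e : R) (a b w : Y) : Prop :=
  Ys d f a e w /\ Yu d finv b e w /\
  forall w', Ys d f a e w' -> Yu d finv b e w' -> w' = w.

End Defs.

From Stdlib Require Import Reals Lra Lia.
Open Scope R_scope.

(** For [z] in [Y^u(f^n y1, delta)] put [w = f^-n z]. Then [w] lies in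
    [Y^u(y1, delta)] and its forward orbit stays [delta]-close to that of [y1]
    up to time [n]. Continuity of [gamma] puts [gamma w] in a small unstable
    ball around [y2], so [f^j (gamma w)] follows [f^j y2] below some fixed time
    [K]; beyond [K] the asymptotic property of [gamma] chains
    [f^j y2 ~ f^j y1 ~ f^j w ~ f^j (gamma w)]. Hence [f^n (gamma w)] lies in
    [Y^u(f^n y2, eps/2)] and, by asymptoticity again, in [Y^s(z, eps/2)];
    expansiveness forces such a point to be the bracket [[z, f^n y2]].
    Conjugating by [f^n] and restricting to an open subset both preserve stable
    local conjugacies, and local unstable balls are open because the adapted
    metric contracts them under [f^-1]. *)

Lemma exists_pos_le3 a b c : 0 < a -> 0 < b -> 0 < c ->
  exists m, 0 < m /\ m <= a /\ m <= b /\ m <= c.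
Proof.
  intros. exists (Rmin a (Rmin b c)).
  unfold Rmin; repeat destruct (Rle_dec _ _); lra.
Qed.

Section Iterates.
Context {A : Type} (f finv : A -> A).
Hypothesis finv_f : forall x, finv (f x) = x.

Lemma iter_cancel k x : Nat.iter k finv (Nat.iter k f x) = x.
Proof.
  induction k as [|k IH]; [reflexivity|].
  rewrite Nat.iter_succ_r, Nat.iter_succ, finv_f. exact IH.
Qed.

Lemma iter_finv_iter_le k n x :
  (k <= n)%nat -> Nat.iter k finv (Nat.iter n f x) = Nat.iter (n - k) f x.
Proof.
  intros Hk.
  replace (Nat.iter n f x) with (Nat.iter k f (Nat.iter (n - k) f x)).
  - apply iter_cancel.
  - rewrite <- Nat.iter_add. f_equal. lia.
Qed.

Lemma iter_finv_iter_ge k n x :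
  (n <= k)%nat -> Nat.iter k finv (Nat.iter n f x) = Nat.iter (k - n) finv x.
Proof.
  intros Hk.
  replace (Nat.iter k finv (Nat.iter n f x))
    with (Nat.iter (k - n) finv (Nat.iter n finv (Nat.iter n f x))).
  - rewrite iter_cancel. reflexivity.
  - rewrite <- Nat.iter_add. f_equal. lia.
Qed.

End Iterates.

Section UnstableSets.
Variables (Y : Type) (d : Y -> Y -> R) (f finv : Y -> Y).
Hypothesis hd : is_metric d.
Hypothesis finv_f : forall x, finv (f x) = x.
Hypothesis f_finv : forall x, f (finv x) = x.
Hypothesis f_cont : mcontinuous d f.

Lemma dist_refl x : d x x = 0.
Proof. apply hd. reflexivity. Qed.

Lemma dist_triangle_sym a x y : d x y <= d a x + d a y.
Proof.
  destruct hd as [_ [_ [Hsym Htri]]].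
  rewrite (Hsym a x). apply Htri.
Qed.

Lemma Yu_weaken y e e' z : e <= e' -> Yu d finv y e z -> Yu d finv y e' z.
Proof. intros He Hz n. specialize (Hz n). lra. Qed.

Lemma Yu_refl y e : 0 < e -> Yu d finv y e y.
Proof. intros He n. rewrite dist_refl. exact He. Qed.

Lemma Yu_iter_iff n a b e :
  Yu d finv (Nat.iter n f a) e (Nat.iter n f b) <->
  Yu d finv a e b /\
  forall j, (j <= n)%nat -> d (Nat.iter j f a) (Nat.iter j f b) < e.
Proof.
  split.
  - intros H. split.
    + intros k. specialize (H (k + n)%nat).
      rewrite !(iter_finv_iter_ge f finv finv_f) in H by lia.
      replace (k + n - n)%nat with k in H by lia. exact H.
    + intros j Hj. specialize (H (n - j)%nat).
      rewrite !(iter_finv_iter_le f finv finv_f) in H by lia.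
      replace (n - (n - j))%nat with j in H by lia. exact H.
  - intros [Hu Hf] k. destruct (Nat.le_gt_cases k n) as [Hk|Hk].
    + rewrite !(iter_finv_iter_le f finv finv_f) by lia. apply Hf. lia.
    + rewrite !(iter_finv_iter_ge f finv finv_f) by lia. apply Hu.
Qed.

Lemma iter_mcontinuous j : mcontinuous d (Nat.iter j f).
Proof.
  induction j as [|j IH]; intros x e He.
  - exists e. split; auto.
  - destruct (f_cont (Nat.iter j f x) e He) as [r1 [Hr1 H1]].
    destruct (IH x r1 Hr1) as [r2 [Hr2 H2]].
    exists r2. split; auto. intros y Hy. apply H1, H2, Hy.
Qed.

Lemma iter_mcontinuous_upto x e K : 0 < e ->
  exists r, 0 < r /\ forall u, d x u < r ->
    forall j, (j < K)%nat -> d (Nat.iter j f x) (Nat.iter j f u) < e.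
Proof.
  intros He. induction K as [|K [r1 [Hr1 H1]]].
  - exists 1. split; [lra|]. intros u _ j Hj. lia.
  - destruct (iter_mcontinuous K x e He) as [r2 [Hr2 H2]].
    exists (Rmin r1 r2). split; [apply Rmin_glb_lt; auto|].
    intros u Hu j Hj.
    pose proof (Rmin_l r1 r2). pose proof (Rmin_r r1 r2).
    destruct (Nat.eq_dec j K) as [->|Hne].
    + apply H2. lra.
    + apply H1; [lra|lia].
Qed.

Lemma uopen_ext y (A B : Y -> Prop) :
  (forall z, A z <-> B z) -> uopen d finv y A -> uopen d finv y B.
Proof.
  intros HAB [Hcls Hopen]. split.
  - intros z Hz. apply Hcls, HAB, Hz.
  - intros z Hz. destruct (Hopen z (proj2 (HAB z) Hz)) as [e [He HA]].
    exists e. split; auto. intros w Hw. apply HAB, HA, Hw.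
Qed.

Lemma uopen_and y (A B : Y -> Prop) :
  uopen d finv y A -> uopen d finv y B -> uopen d finv y (fun z => A z /\ B z).
Proof.
  intros [HAcls HAopen] [_ HBopen]. split.
  - intros z [Hz _]. auto.
  - intros z [Ha Hb].
    destruct (HAopen z Ha) as [e1 [He1 H1]], (HBopen z Hb) as [e2 [He2 H2]].
    exists (Rmin e1 e2). split; [apply Rmin_glb_lt; auto|].
    intros w Hw. split.
    + apply H1. eapply Yu_weaken; [apply Rmin_l|exact Hw].
    + apply H2. eapply Yu_weaken; [apply Rmin_r|exact Hw].
Qed.

Lemma uopen_iter_image y n (S : Y -> Prop) :
  uopen d finv y S ->
  uopen d finv (Nat.iter n f y) (fun u => S (Nat.iter n finv u)).
Proof.
  intros [Hcls Hopen]. split.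
  - intros u Hu e He. destruct (Hcls _ Hu e He) as [N HN].
    exists (N + n)%nat. intros m Hm.
    rewrite (iter_finv_iter_ge f finv finv_f m n y) by lia.
    replace (Nat.iter m finv u) with (Nat.iter (m - n) finv (Nat.iter n finv u))
      by (rewrite <- Nat.iter_add; f_equal; lia).
    apply HN. lia.
  - intros u Hu. destruct (Hopen _ Hu) as [e [He HS]].
    exists e. split; auto. intros w Hw. apply HS.
    intros k. rewrite <- !Nat.iter_add. apply Hw.
Qed.

Lemma uopen_iter_preimage y n (B : Y -> Prop) :
  uopen d finv (Nat.iter n f y) B -> uopen d finv y (fun v => B (Nat.iter n f v)).
Proof.
  intros [Hcls Hopen]. split.
  - intros v Hv e He. destruct (Hcls _ Hv e He) as [N HN].
    exists N. intros m Hm. specialize (HN (m + n)%nat ltac:(lia)).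
    rewrite !(iter_finv_iter_ge f finv finv_f (m + n) n) in HN by lia.
    replace (m + n - n)%nat with m in HN by lia. exact HN.
  - intros v Hv. destruct (Hopen _ Hv) as [e [He HB]].
    destruct (iter_mcontinuous_upto v e (S n) He) as [r [Hr Hcont]].
    exists (Rmin r e). split; [apply Rmin_glb_lt; auto|].
    intros u Hu. apply HB, Yu_iter_iff. split.
    + eapply Yu_weaken; [apply Rmin_r|exact Hu].
    + intros j Hj. apply Hcont; [|lia].
      specialize (Hu 0%nat). pose proof (Rmin_l r e). simpl in Hu. lra.
Qed.

Lemma is_bracket_of_close eY e a b w :
  expansive d f finv eY -> 2 * e <= eY ->
  Ys d f a e w -> Yu d finv b e w -> is_bracket d f finv e a b w.
Proof.
  intros [_ Hexp] He Hs Hu. split; [exact Hs|split; [exact Hu|]].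
  intros w' Hs' Hu'. apply Hexp. intros [|p|p]; simpl.
  - specialize (Hs' 0%nat). specialize (Hs 0%nat). simpl in Hs, Hs'.
    pose proof (dist_triangle_sym a w' w). lra.
  - specialize (Hs' (Pos.to_nat p)). specialize (Hs (Pos.to_nat p)).
    pose proof (dist_triangle_sym (Nat.iter (Pos.to_nat p) f a)
      (Nat.iter (Pos.to_nat p) f w') (Nat.iter (Pos.to_nat p) f w)). lra.
  - specialize (Hu' (Pos.to_nat p)). specialize (Hu (Pos.to_nat p)).
    pose proof (dist_triangle_sym (Nat.iter (Pos.to_nat p) finv b)
      (Nat.iter (Pos.to_nat p) finv w') (Nat.iter (Pos.to_nat p) finv w)). lra.
Qed.

Section Adapted.
Variables eta lam : R.
Hypothesis eta_pos : 0 < eta.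
Hypothesis lam_bounds : 0 < lam < 1.
Hypothesis finv_contract : forall y z w,
  Yu d finv y eta z -> Yu d finv y eta w -> d (finv z) (finv w) <= lam * d z w.

Lemma Yu_contract y e w k : e <= eta -> Yu d finv y e w ->
  d (Nat.iter k finv y) (Nat.iter k finv w) <= lam ^ k * d y w.
Proof.
  intros He Hw. induction k as [|k IH]; simpl; [lra|].
  eapply Rle_trans.
  - apply (finv_contract (Nat.iter k finv y)).
    + apply Yu_refl. exact eta_pos.
    + intros i. rewrite <- !Nat.iter_add. specialize (Hw (i + k)%nat). lra.
  - nra.
Qed.

Lemma uopen_Yu y e : 0 < e -> e <= eta -> uopen d finv y (Yu d finv y e).
Proof.
  intros He Heta. split.
  - intros w Hw e' He'.
    set (D := d y w). assert (HD : 0 <= D) by apply hd.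
    destruct (pow_lt_1_zero lam ltac:(rewrite Rabs_right; lra) (e' / (D + 1)))
      as [N HN]; [apply Rdiv_lt_0_compat; lra|].
    exists N. intros n Hn. specialize (HN n Hn).
    rewrite Rabs_right in HN by (apply Rle_ge, pow_le; lra).
    assert (Hlt : lam ^ n * (D + 1) < e' / (D + 1) * (D + 1))
      by (apply Rmult_lt_compat_r; lra).
    replace (e' / (D + 1) * (D + 1)) with e' in Hlt by (field; lra).
    pose proof (Yu_contract y e w n Heta Hw) as Hc. fold D in Hc.
    pose proof (pow_le lam n). nra.
  - intros w Hw. exists (e - d y w). split; [specialize (Hw 0%nat); simpl in Hw; lra|].
    intros v Hv k. specialize (Hv k).
    pose proof (Yu_contract y e w k Heta Hw).
    assert (lam ^ k <= 1).
    { destruct k; [simpl; lra|]. apply Rlt_le, pow_lt_1_compat; [lra|lia]. }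
    destruct hd as [Hnn [_ [_ Htri]]].
    pose proof (Htri (Nat.iter k finv y) (Nat.iter k finv w) (Nat.iter k finv v)).
    pose proof (Hnn y w). nra.
Qed.

Section Conjugacy.
Variables (y1 y2 : Y) (U V : Y -> Prop) (gamma : Y -> Y).
Hypothesis hgamma : slc d f finv y1 y2 U V gamma.

Lemma slc_iterate n :
  slc d f finv (Nat.iter n f y1) (Nat.iter n f y2)
    (fun u => U (Nat.iter n finv u)) (fun v => V (Nat.iter n finv v))
    (fun u => Nat.iter n f (gamma (Nat.iter n finv u))).
Proof.
  destruct hgamma as [HUo [HUy1 [HVo [HVy2 [Hy12 [HUV [[g [HgVU [Hgg [Hgg' [Hcg Hcg']]]]] Hasym]]]]]]].
  pose proof (iter_cancel f finv finv_f n) as Hcancel.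
  pose proof (iter_cancel finv f f_finv n) as Hcancel'.
  split; [exact (uopen_iter_image y1 n U HUo)|].
  split; [rewrite Hcancel; exact HUy1|].
  split; [exact (uopen_iter_image y2 n V HVo)|].
  split; [rewrite Hcancel; exact HVy2|].
  split; [rewrite Hcancel, Hy12; reflexivity|].
  split; [intros u Hu; rewrite Hcancel; apply HUV, Hu|].
  split.
  - exists (fun v => Nat.iter n f (g (Nat.iter n finv v))).
    split; [intros v Hv; rewrite Hcancel; apply HgVU, Hv|].
    split; [intros u Hu; rewrite Hcancel, Hgg, Hcancel' by exact Hu; reflexivity|].
    split; [intros v Hv; rewrite Hcancel, Hgg', Hcancel' by exact Hv; reflexivity|].
    split; intros B HB.
    + exact (uopen_iter_image y1 n _ (Hcg _ (uopen_iter_preimage y2 n B HB))).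
    + exact (uopen_iter_image y2 n _ (Hcg' _ (uopen_iter_preimage y1 n B HB))).
  - intros e He. destruct (Hasym e He) as [K HK]. exists K. intros k Hk u Hu.
    rewrite <- (Hcancel' u) at 1. rewrite <- !Nat.iter_add.
    apply HK; [lia|exact Hu].
Qed.

Lemma slc_restrict (W : Y -> Prop) :
  uopen d finv y1 W -> W y1 -> (forall z, W z -> U z) ->
  slc d f finv y1 y2 W (fun v => exists z, W z /\ v = gamma z) gamma.
Proof.
  intros HWo HWy1 HWU.
  destruct hgamma as [_ [_ [_ [_ [Hy12 [HUV [[g [HgVU [Hgg [Hgg' [Hcg Hcg']]]]] Hasym]]]]]]].
  assert (Himage : forall v, (exists z, W z /\ v = gamma z) <-> V v /\ W (g v)).
  { intros v. split.
    - intros [z [Hz ->]]. rewrite Hgg by auto. auto.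
    - intros [Hv Hgv]. exists (g v). rewrite Hgg' by exact Hv. auto. }
  split; [exact HWo|]. split; [exact HWy1|].
  split; [exact (uopen_ext y2 _ _ (fun v => iff_sym (Himage v)) (Hcg' W HWo))|].
  split; [exists y1; auto|]. split; [exact Hy12|].
  split; [intros z Hz; exists z; auto|].
  split.
  - exists g.
    split; [intros v Hv; apply Himage, Hv|].
    split; [intros z Hz; apply Hgg, HWU, Hz|].
    split; [intros v Hv; apply Hgg', Himage, Hv|].
    split; intros B HB.
    + refine (uopen_ext y1 _ _ _ (uopen_and y1 _ _ HWo (Hcg B HB))).
      intros z. split; [intros [Hz [_ Hb]]; auto|]. intros [Hz Hb]. auto.
    + refine (uopen_ext y2 _ _ _ (Hcg' _ (uopen_and y1 _ _ HWo HB))).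
      intros v. rewrite Himage. symmetry. apply and_assoc.
  - intros e He. destruct (Hasym e He) as [K HK].
    exists K. intros k Hk z Hz. apply HK; auto.
Qed.

Lemma slc_iter_Ys e : 0 < e -> exists K, forall n, (K <= n)%nat ->
  forall w, U w -> Ys d f (Nat.iter n f w) e (Nat.iter n f (gamma w)).
Proof.
  intros He. destruct hgamma as [_ [_ [_ [_ [_ [_ [_ Hasym]]]]]]].
  destruct (Hasym (e / 2)) as [K HK]; [lra|].
  exists K. intros n Hn w Hw m. rewrite <- !Nat.iter_add.
  specialize (HK (m + n)%nat ltac:(lia) w Hw). lra.
Qed.

Lemma slc_forward_shadow e : 0 < e -> exists r, 0 < r /\
  forall w j, U w -> d y2 (gamma w) < r ->
    d (Nat.iter j f y1) (Nat.iter j f w) < e ->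
    d (Nat.iter j f y2) (Nat.iter j f (gamma w)) < 3 * e.
Proof.
  intros He. destruct hgamma as [_ [HUy1 [_ [_ [Hy12 [_ [_ Hasym]]]]]]].
  destruct (Hasym e He) as [K HK].
  destruct (iter_mcontinuous_upto y2 (3 * e) K) as [r [Hr Hcont]]; [lra|].
  exists r. split; [exact Hr|]. intros w j Hw Hwr Hj1.
  destruct (Nat.lt_ge_cases j K) as [Hj|Hj]; [apply Hcont; auto|].
  pose proof (HK j Hj y1 HUy1) as Hy. rewrite Hy12 in Hy.
  pose proof (HK j Hj w Hw) as Hgw.
  destruct hd as [_ [_ [Hsym Htri]]]. rewrite Hsym in Hy.
  pose proof (Htri (Nat.iter j f y2) (Nat.iter j f y1) (Nat.iter j f w)).
  pose proof (Htri (Nat.iter j f y2) (Nat.iter j f w) (Nat.iter j f (gamma w))).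
  lra.
Qed.

Lemma slc_Yu_preimage r : 0 < r -> r <= eta -> exists e, 0 < e /\
  forall w, Yu d finv y1 e w -> U w /\ Yu d finv y2 r (gamma w).
Proof.
  intros Hr Hreta.
  destruct hgamma as [_ [HUy1 [_ [_ [Hy12 [_ [[g [_ [_ [_ [Hcg _]]]]] _]]]]]]].
  destruct (Hcg _ (uopen_Yu y2 r Hr Hreta)) as [_ Hopen].
  apply Hopen. split; [exact HUy1|]. rewrite Hy12. apply Yu_refl, Hr.
Qed.

Lemma slc_iter_close e : 0 < e -> exists delta, 0 < delta /\ delta <= eta /\
  exists N, forall n, (N <= n)%nat -> forall w,
    Yu d finv (Nat.iter n f y1) delta (Nat.iter n f w) ->
    U w /\ Yu d finv (Nat.iter n f y2) e (Nat.iter n f (gamma w)) /\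
    Ys d f (Nat.iter n f w) e (Nat.iter n f (gamma w)).
Proof.
  intros He.
  destruct (slc_forward_shadow (e / 3)) as [r [Hr Hshadow]]; [lra|].
  destruct (exists_pos_le3 eta e r) as [r' [Hr' [Hr'eta [Hr'e Hr'r]]]]; auto.
  destruct (slc_Yu_preimage r' Hr' Hr'eta) as [e1 [He1 Hpre]].
  destruct (exists_pos_le3 eta e1 (e / 3)) as [delta [Hd [Hdeta [Hde1 Hde]]]];
    [auto|auto|lra|].
  destruct (slc_iter_Ys e He) as [N HN].
  exists delta. split; [exact Hd|split; [exact Hdeta|]].
  exists N. intros n Hn w Hw.
  apply Yu_iter_iff in Hw. destruct Hw as [Hw_back Hw_fwd].
  destruct (Hpre w (Yu_weaken y1 delta e1 w Hde1 Hw_back)) as [HUw Hgw].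
  split; [exact HUw|split; [|apply HN; auto]].
  apply Yu_iter_iff. split; [exact (Yu_weaken y2 r' e _ Hr'e Hgw)|].
  intros j Hj. replace e with (3 * (e / 3)) by field.
  apply Hshadow; [exact HUw| |].
  - specialize (Hgw 0%nat). simpl in Hgw. lra.
  - specialize (Hw_fwd j Hj). lra.
Qed.

End Conjugacy.
End Adapted.
End UnstableSets.

Theorem mainTheorem5 (Y : Type) (d : Y -> Y -> R) (f finv : Y -> Y) (eY : R)
  (hd : is_metric d) (hc : is_compact_metric d) (hf : is_homeo d f finv)
  (hexp : expansive d f finv eY) (hadapt : adapted d f finv)
  (y1 y2 : Y) (U V : Y -> Prop) (gamma : Y -> Y)
  (hgamma : slc d f finv y1 y2 U V gamma)
  (eps : R) (heps : 0 < eps) (hepsY : eps <= eY) :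
  exists (delta : R) (N : nat), 0 < delta /\
    forall n : nat, (N <= n)%nat ->
      let x1 := Nat.iter n f y1 in
      let x2 := Nat.iter n f y2 in
      let gn := fun z => Nat.iter n f (gamma (Nat.iter n finv z)) in
      (* f^n o gamma o f^-n is defined on Y^u(f^n y1, delta) *)
      (forall z, Yu d finv x1 delta z -> U (Nat.iter n finv z)) /\
      (* it maps into Y^u(f^n y2, eps) and equals z |-> [z, f^n y2] *)
      (forall z, Yu d finv x1 delta z ->
         Yu d finv x2 eps (gn z) /\ is_bracket d f finv (eps / 2) z x2 (gn z)) /\
      (* and it is a stable local conjugacy from f^n y1 to f^n y2 *)
      slc d f finv x1 x2 (Yu d finv x1 delta)
        (fun w => exists z, Yu d finv x1 delta z /\ w = gn z) gn.
Proof.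
  destruct hf as [finv_f [f_finv [f_cont _]]].
  destruct hadapt as [eta [lam [eta_pos [lam_bounds [_ finv_contract]]]]].
  destruct (slc_iter_close Y d f finv hd finv_f f_cont eta lam eta_pos lam_bounds
    finv_contract y1 y2 U V gamma hgamma (eps / 2)) as [delta [Hd [Hdeta [N HN]]]];
    [lra|].
  exists delta, N. split; [exact Hd|]. intros n Hn. cbv zeta.
  assert (Hclose : forall z, Yu d finv (Nat.iter n f y1) delta z ->
    U (Nat.iter n finv z) /\
    Yu d finv (Nat.iter n f y2) (eps / 2) (Nat.iter n f (gamma (Nat.iter n finv z))) /\
    Ys d f z (eps / 2) (Nat.iter n f (gamma (Nat.iter n finv z)))).
  { intros z Hz. rewrite <- (iter_cancel finv f f_finv n z) in Hz.
    rewrite <- (iter_cancel finv f f_finv n z) at 3. exact (HN n Hn _ Hz). }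
  split; [intros z Hz; apply Hclose, Hz|]. split.
  - intros z Hz. destruct (Hclose z Hz) as [_ [Hu Hs]]. split.
    + apply (Yu_weaken Y d finv _ (eps / 2)); [lra|exact Hu].
    + apply (is_bracket_of_close Y d f finv hd eY); auto; lra.
  - apply (slc_restrict Y d f finv _ _ _ _ _
      (slc_iterate Y d f finv finv_f f_finv f_cont y1 y2 U V gamma hgamma n)).
    + exact (uopen_Yu Y d finv hd eta lam eta_pos lam_bounds finv_contract _ delta Hd Hdeta).
    + apply Yu_refl; auto.
    + intros z Hz. apply Hclose, Hz.
Qed.
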